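(* Let $d,k\in\mathbb{N}$ with $k\ge2$ and $d>2k$, and put $n=d-2k$. Let $\phi=\alpha\phi_1+\beta\phi_2$ with $\alpha,\beta>0$. Then every point $\mathbf{z}\in\Lambda_1$ with $\phi[\mathbf{z}]=\min\{\phi[\mathbf{u}]:\mathbf{u}\in\Lambda_1\}$ satisfies $|\mathbf{z}\cdot\mathbf{j}|\le\frac dn$; and if such a minimal $\mathbf{z}$ satisfies $|\mathbf{z}\cdot\mathbf{j}|=\frac dn$, then $\mathbf{z}\in\{\frac{\mathbf{j}}{n},-\frac{\mathbf{j}}{n}\}$.
   Context: $\mathbf{e}_1,\dots,\mathbf{e}_d$ is the standard basis of $\mathbb{R}^d$, $\mathbf{j}=(1,\dots,1)$. $L^1$ is the set of vectors in $\mathbb{Z}^d$ with $k$ coordinates $-1$ and $d-k$ coordinates $1$; $\Lambda$ is the $\mathbb{Z}$-span of $\mathbf{e}_1,\dots,\mathbf{e}_d,\frac{\mathbf{j}}{n}$; $\Lambda_1=\{\mathbf{z}\in\Lambda:\ \mathbf{z}\cdot\boldsymbol{\ell}\equiv1\pmod2\ \forall\boldsymbol{\ell}\in L^1\}$. $\phi_1[\mathbf{x}]=(\sum_ix_i)^2$, $\phi_2[\mathbf{x}]=\bigl|\mathbf{x}-\frac{\sum_ix_i}{d}\mathbf{j}\bigr|^2$. *)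

From HB Require Import structures.
From mathcomp Require Import all_boot all_order all_algebra.
From mathcomp Require Import reals.
Set Implicit Arguments. Unset Strict Implicit. Unset Printing Implicit Defensive.
Import Order.TTheory GRing.Theory Num.Theory.
Local Open Scope ring_scope.

Section Defs.
Variable R : realType.

Definition jv (d : nat) : 'rV[R]_d := const_mx 1.

Definition dotv (d : nat) (u v : 'rV[R]_d) : R := \sum_(i < d) u 0 i * v 0 i.

Definition inL1 (d k : nat) (l : 'rV[R]_d) : Prop :=
  (forall i, l 0 i = 1 \/ l 0 i = -1) /\ #|[set i | l 0 i == -1]| = k.

Definition inLam (d n : nat) (z : 'rV[R]_d) : Prop :=
  exists (m : 'I_d -> int) (t : int),
    z = \row_(i < d) ((m i)%:~R + t%:~R * (n%:R)^-1 * jv d 0 i).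

Definition inLam1 (d k n : nat) (z : 'rV[R]_d) : Prop :=
  inLam n z /\
  forall l : 'rV[R]_d, inL1 k l -> exists q : int, dotv z l = (2 * q + 1)%:~R.

Definition phi1 (d : nat) (x : 'rV[R]_d) : R := (\sum_(i < d) x 0 i) ^+ 2.

Definition phi2 (d : nat) (x : 'rV[R]_d) : R :=
  let w := x - ((\sum_(i < d) x 0 i) / d%:R) *: jv d in dotv w w.

Definition phi (d : nat) (a b : R) (x : 'rV[R]_d) : R := a * phi1 x + b * phi2 x.

End Defs.

(** Comparing with [j/n], which lies in [Lambda_1] and has [phi2 = 0] and
    [j/n . j = d/n], a minimiser [z] satisfies
    [a (z.j)^2 <= phi z <= phi (j/n) = a (d/n)^2], whence [|z.j| <= d/n].
    In case of equality [phi2 z = 0], so [z] is a multiple of [j], which the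
    value of [z.j] pins down to [j/n] or [-j/n]. *)
From HB Require Import structures.
From mathcomp Require Import all_boot all_order all_algebra.
From mathcomp Require Import reals.
From mathcomp Require Import ring lra.
Set Implicit Arguments. Unset Strict Implicit. Unset Printing Implicit Defensive.
Import Order.TTheory GRing.Theory Num.Theory.
Local Open Scope ring_scope.

Section Quadratic.
Variables (R : realType) (d : nat).
Implicit Types (x w : 'rV[R]_d) (c : R).

Lemma dotv_jv x : dotv x (jv R d) = \sum_(i < d) x 0 i.
Proof. by apply: eq_bigr => i _; rewrite mxE mulr1. Qed.

Lemma sum_scale_jv c : \sum_(i < d) (c *: jv R d) 0 i = c * d%:R.
Proof.
rewrite (eq_bigr (fun=> c)) => [|i _]; last by rewrite !mxE mulr1.
by rewrite sumr_const card_ord mulr_natr.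
Qed.

Lemma dotv_self_ge0 w : 0 <= dotv w w.
Proof. by apply: sumr_ge0 => i _; rewrite -expr2 sqr_ge0. Qed.

Lemma dotv_self_eq0 w : dotv w w = 0 -> w = 0.
Proof.
move=> /psumr_eq0P w0; apply/matrixP => i j; rewrite (ord1 i) mxE.
have /eqP := w0 (fun j _ => sqr_ge0 (w 0 j)) j isT.
by rewrite mulf_eq0 orbb => /eqP.
Qed.

Lemma phi2_ge0 x : 0 <= phi2 x.
Proof. exact: dotv_self_ge0. Qed.

Lemma phi2_eq0 x : phi2 x = 0 -> x = ((\sum_(i < d) x 0 i) / d%:R) *: jv R d.
Proof. by move/dotv_self_eq0/eqP; rewrite subr_eq0 => /eqP. Qed.

(* Each index [i : 'I_d] witnesses [d > 0], so no hypothesis on [d] is needed. *)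
Lemma phi2_scale_jv c : phi2 (c *: jv R d) = 0.
Proof.
rewrite /phi2 sum_scale_jv /dotv big1 // => i _.
have d_neq0 : d%:R != 0 :> R by rewrite pnatr_eq0 -lt0n (leq_ltn_trans _ (ltn_ord i)).
by rewrite !mxE !mulr1 mulfK // subrr mul0r.
Qed.

Lemma phi_scale_jv a b c : phi a b (c *: jv R d) = a * (c * d%:R) ^+ 2.
Proof. by rewrite /phi /phi1 sum_scale_jv phi2_scale_jv mulr0 addr0. Qed.

Lemma phi1_le_phi a b x : 0 <= b -> a * phi1 x <= phi a b x.
Proof. by move=> b_ge0; rewrite lerDl mulr_ge0 ?phi2_ge0. Qed.

End Quadratic.

Section Lattice.
Variables (R : realType) (d k : nat).

Lemma sum_inL1 (l : 'rV[R]_d) : inL1 k l -> \sum_(i < d) l 0 i = d%:R - 2 * k%:R.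
Proof.
move=> [l_pm1 card_neg].
have -> : \sum_(i < d) l 0 i = \sum_(i < d) (1 - 2 * (l 0 i == -1)%:R).
  apply: eq_bigr => i _; case: (l_pm1 i) => ->; last by rewrite eqxx /=; lra.
  have /negbTE -> : 1 != -1 :> R by rewrite -subr_eq0 opprK -mulr2n pnatr_eq0.
  rewrite /=; lra.
rewrite sumrB sumr_const card_ord -mulr_sumr -card_neg -sum1_card natr_sum.
congr (_ - 2 * _); rewrite [RHS]big_mkcond; apply: eq_bigr => i _.
by rewrite inE; case: eqP.
Qed.

Lemma scale_jv_inLam1 :
  (2 * k < d)%N -> inLam1 k (d - 2 * k) (((d - 2 * k)%:R)^-1 *: jv R d).
Proof.
move=> hd; have n_gt0 : (0 < d - 2 * k)%N by rewrite subn_gt0.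
split.
  by exists (fun=> 0), 1; apply/rowP => i; rewrite !mxE add0r mul1r.
move=> l /sum_inL1 sum_l; exists 0; rewrite mulr0 add0r.
rewrite /dotv (eq_bigr (fun i => (d - 2 * k)%:R^-1 * l 0 i)) => [|i _]; last first.
  by rewrite !mxE mulr1.
have n_eq : (d - 2 * k)%:R = d%:R - 2 * k%:R :> R by rewrite natrB ?natrM // ltnW.
by rewrite -mulr_sumr sum_l -n_eq mulVf // pnatr_eq0 -lt0n.
Qed.

End Lattice.

Theorem lemma3 (R : realType) (d k : nat) (hk : (2 <= k)%N) (hd : (2 * k < d)%N)
  (a b : R) (ha : 0 < a) (hb : 0 < b) (z : 'rV[R]_d)
  (hz : inLam1 k (d - 2 * k) z)
  (hmin : forall u : 'rV[R]_d, inLam1 k (d - 2 * k) u -> phi a b z <= phi a b u) :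
  `|dotv z (jv R d)| <= d%:R / (d - 2 * k)%:R /\
  (`|dotv z (jv R d)| = d%:R / (d - 2 * k)%:R ->
     z = ((d - 2 * k)%:R)^-1 *: jv R d \/ z = - (((d - 2 * k)%:R)^-1 *: jv R d)).
Proof.
set N : R := (d - 2 * k)%:R; set D : R := d%:R; set c := D / N.
have N_gt0 : 0 < N by rewrite ltr0n subn_gt0.
have D_gt0 : 0 < D by rewrite ltr0n (leq_ltn_trans _ hd).
have c_gt0 : 0 < c by rewrite divr_gt0.
have phi_z_le : phi a b z <= a * c ^+ 2.
  by rewrite /c [D / N]mulrC -(phi_scale_jv d a b); exact/hmin/scale_jv_inLam1.
rewrite dotv_jv; set s := \sum_(i < d) z 0 i.
have phi_z_ge := phi1_le_phi a z (ltW hb); rewrite /phi1 -/s in phi_z_ge.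
have s_norm2 : `|s| ^+ 2 = s ^+ 2 by rewrite real_normK ?num_real.
have s2_le : s ^+ 2 <= c ^+ 2 by rewrite -(ler_pM2l ha); lra.
split; first by have := normr_ge0 s; nra.
move=> s_norm; have phi2_z0 : phi2 z = 0.
  apply/eqP; rewrite eq_le phi2_ge0 andbT -(pmulr_rle0 _ hb).
  by move: phi_z_le; rewrite /phi /phi1 -/s -s_norm2 s_norm; lra.
rewrite (phi2_eq0 phi2_z0) -/s -/D -scaleNr.
have [s_ge0|s_lt0] := lerP 0 s; [left|right]; congr (_ *: _).
- by rewrite -(ger0_norm s_ge0) s_norm /c; field; lra.
- by rewrite -(opprK s) -(ltr0_norm s_lt0) s_norm /c; field; lra.
Qed.
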